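(* Let $p$ be a prime with $\gcd(p,6)=1$ and $m\ge 1$. The number $C_R(\mathbb{Z}_{p^m})$ of isomorphism classes of nonsingular reduced Weierstrass elliptic curves over $\mathbb{Z}_{p^m}$ is $$C_R(\mathbb{Z}_{p^m})=\begin{cases}2p^m+6 & p\equiv 1 \pmod{12},\\ 2p^m+2 & p\equiv 5\pmod{12},\\ 2p^m+4 & p\equiv 7\pmod{12},\\ 2p^m & p\equiv 11\pmod{12}.\end{cases}$$
   Context: A reduced Weierstrass curve over $\mathbb{Z}_{n}$ is $y^2=x^3+ax+b$ with $(a,b)\in\mathbb{Z}_{n}^2$; it is nonsingular iff $\Delta=-16(4a^3+27b^2)$ is a unit in $\mathbb{Z}_{n}$. Two such curves with coefficients $(a,b)$ and $(\bar a,\bar b)$ are isomorphic iff there is $u\in\mathbb{Z}_{n}^*$ with $\bar a=u^{-4}a$ and $\bar b=u^{-6}b$ (i.e. related by the change of variables $(x,y)\mapsto(u^2x,u^3y)$). $C_R(\mathbb{Z}_n)$ denotes the number of isomorphism classes of nonsingular reduced curves over $\mathbb{Z}_n$. *)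

From HB Require Import structures.
From mathcomp Require Import all_boot all_order all_algebra.
Set Implicit Arguments. Unset Strict Implicit. Unset Printing Implicit Defensive.
Import GRing.Theory.
Local Open Scope ring_scope.

(* A reduced Weierstrass curve y^2 = x^3 + a x + b over 'Z_n is the pair (a,b). *)
Definition disc (n : nat) (c : 'Z_n * 'Z_n) : 'Z_n :=
  - 16%:R * (4%:R * c.1 ^+ 3 + 27%:R * c.2 ^+ 2).

Definition nonsingular (n : nat) (c : 'Z_n * 'Z_n) : bool :=
  disc c \is a GRing.unit.

Definition curve_iso (n : nat) (c c' : 'Z_n * 'Z_n) : bool :=
  [exists u : 'Z_n, (u \is a GRing.unit) &&
     ((c'.1 == u^-1 ^+ 4 * c.1) && (c'.2 == u^-1 ^+ 6 * c.2))].

Definition nonsing_curves (n : nat) : {set 'Z_n * 'Z_n} :=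
  [set c | nonsingular c].

Definition C_R (n : nat) : nat :=
  #|[set [set c' in nonsing_curves n | curve_iso c c'] | c in nonsing_curves n]|.

From mathcomp Require Import all_boot all_order all_algebra all_fingroup all_solvable.
From mathcomp Require Import ring zify.
Set Implicit Arguments. Unset Strict Implicit. Unset Printing Implicit Defensive.
Import GRing.Theory FinRing.Theory.

(* Burnside's lemma for the action (a, b) |-> (u^4 a, u^6 b) of the unit group U
   of R = Z/p^m gives C_R |U| = sum_u |Fix u|.  As R is local with 6 invertible,
   a nonsingular curve has a or b invertible, so u fixes every nonsingular curve
   if u^2 = 1, exactly the curves (a, 0) with a a unit if u^4 = 1 <> u^2, exactly
   the curves (0, b) with b a unit if u^6 = 1 <> u^2, and none otherwise.  Lifting
   the cusp s^3 = r^2 shows that there are p^m |U| nonsingular curves, and U is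
   cyclic of order (p - 1) p^(m-1), so u^k = 1 has gcd(k, p - 1) solutions for
   k = 2, 4, 6.  Altogether C_R + 4 = 2 p^m + gcd(4, p - 1) + gcd(6, p - 1). *)

Section CyclicGroup.

Variable gT : finGroupType.
Local Open Scope group_scope.

Lemma card_cyclic_expg_eq1 (G : {group gT}) k :
  cyclic G -> #|[set x in G | x ^+ k == 1]| = gcdn k #|G|.
Proof.
move=> /cyclicP[a ->]; rewrite -orderE.
set N := #[a]; set g := gcdn k N.
have N_gt0 : 0 < N := order_gt0 a.
have g_gt0 : 0 < g by rewrite gcdn_gt0 N_gt0 orbT.
have g_dvdN : g %| N := dvdn_gcdr k N.
suff -> : [set x in <[a]> | x ^+ k == 1] = <[a ^+ (N %/ g)]>.
  by rewrite -orderE orderXdiv ?dvdn_div // divnA // mulKn.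
apply/setP => x; rewrite inE; apply/andP/idP => [[/cycleP[i ->] aik1] | xb].
  have : #[a ^+ i] %| g by rewrite dvdn_gcd order_dvdn aik1 order_dvdG ?mem_cycle.
  rewrite order_dvdn -expgM -order_dvdn -/N -dvdn_divLR // => /dvdnP[j ->].
  by rewrite mulnC expgM mem_cycle.
split; first exact: subsetP (cycleX a _) x xb.
rewrite -order_dvdn (dvdn_trans (order_dvdG xb)) //= -orderE orderXdiv ?dvdn_div //.
by rewrite divnA // mulKn // dvdn_gcdl.
Qed.

End CyclicGroup.

Local Open Scope ring_scope.

Section UnitRing.

Variable R : unitRingType.

Lemma mulr_fixed_unit (x a : R) : a \is a GRing.unit -> (x * a == a) = (x == 1).
Proof. by move=> ua; rewrite -{2}[a]mul1r (inj_eq (mulIr ua)). Qed.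

Lemma mulr_fixed_eq0 (x a : R) : x - 1 \is a GRing.unit -> (x * a == a) = (a == 0).
Proof.
by move=> ux; rewrite -subr_eq0 -{2}[a]mul1r -mulrBl (mulrI_eq0 _ (mulrI ux)).
Qed.

End UnitRing.

Definition local_ring (R : unitRingType) : Prop := forall x y : R,
  x \isn't a GRing.unit -> y \isn't a GRing.unit -> x + y \isn't a GRing.unit.

Section LocalRing.

Variable R : comUnitRingType.
Hypothesis nonunitD : local_ring R.

Lemma nonunitMr (x y : R) : x \isn't a GRing.unit -> x * y \isn't a GRing.unit.
Proof. by apply: contra; rewrite unitrM => /andP[]. Qed.

Lemma unitrD_nonunit (x y : R) :
  x \is a GRing.unit -> y \isn't a GRing.unit -> x + y \is a GRing.unit.
Proof.
move=> ux ny; apply: contraT => nxy.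
by rewrite -(addrK y x) (negPf (nonunitD nxy _)) ?unitrN in ux.
Qed.

(* If x - 1 were not a unit, 1 + x + ... + x^(k-1) would be k plus a non-unit,
   hence a unit, and it annihilates x - 1. *)
Lemma unit_subr1_of_root1 (x : R) k :
  (k%:R : R) \is a GRing.unit -> x ^+ k = 1 -> x != 1 -> x - 1 \is a GRing.unit.
Proof.
move=> uk xk1 x_neq1; apply: contraT => nx1.
suff: x - 1 == 0 by rewrite subr_eq0 (negbTE x_neq1).
have geom_unit : \sum_(i < k) x ^+ i \is a GRing.unit.
  have -> : \sum_(i < k) x ^+ i = k%:R + \sum_(i < k) (x ^+ i - 1).
    by rewrite sumrB sumr_const card_ord addrC subrK.
  apply: unitrD_nonunit => //.
  elim/big_ind: _ => [|a b|i _]; [by rewrite unitr0 | exact: nonunitD |].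
  by rewrite subrX1; apply: nonunitMr.
by rewrite -(mulrK geom_unit (x - 1)) -subrX1 xk1 subrr mul0r.
Qed.

End LocalRing.

Section ReducedCurves.

Variable R : finComUnitRingType.

Definition cubic_disc (c : R * R) : R := - (4%:R * c.1 ^+ 3 + 27%:R * c.2 ^+ 2).

Definition nonsingular_curves : {set R * R} := [set c | cubic_disc c \is a GRing.unit].

Definition scale_curve (c : R * R) (u : {unit R}) : R * R :=
  (val u ^+ 4 * c.1, val u ^+ 6 * c.2).

Lemma scale_curve1 : scale_curve^~ 1%g =1 id.
Proof. by case=> a b; rewrite /scale_curve !expr1n !mul1r. Qed.

Lemma scale_curveM c : act_morph scale_curve c.
Proof. by case: c => a b u v; rewrite /scale_curve /=; congr (_, _); ring. Qed.

Definition scale_action := TotalAction scale_curve1 scale_curveM.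

Lemma cubic_disc_scale c u : cubic_disc (scale_curve c u) = val u ^+ 12 * cubic_disc c.
Proof. by rewrite /cubic_disc /=; ring. Qed.

Lemma acts_nonsingular_curves : [acts setT, on nonsingular_curves | scale_action].
Proof.
apply/actsP => u _ c; rewrite !inE /= cubic_disc_scale unitrM.
by rewrite unitrX ?(valP u).
Qed.

Lemma mem_fix_scale u c :
  (c \in 'Fix_(nonsingular_curves | scale_action)[u])%g =
  [&& c \in nonsingular_curves, val u ^+ 4 * c.1 == c.1 & val u ^+ 6 * c.2 == c.2].
Proof.
rewrite in_setI; congr (_ && _); case: c => a b.
apply/afix1P/andP => [[-> ->]|[/eqP ea /eqP eb]]; first by rewrite !eqxx.
by rewrite /= /scale_curve ea eb.
Qed.

Lemma card_unitsE : #|[set: {unit R}]| = #|[set x : R | x \is a GRing.unit]|.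
Proof. by rewrite cardsT card_sub; apply: eq_card => x; rewrite !inE. Qed.

Lemma val_unit_expr_eq1 (u : {unit R}) k : (val u ^+ k == 1) = (u ^+ k == 1)%g.
Proof. by rewrite -val_unitX -(inj_eq val_inj). Qed.

Lemma sum_if_expr_eq1 k n :
  (\sum_(u in [set: {unit R}]) (if val u ^+ k == 1%R then n else 0))%N
  = (#|[set u : {unit R} | (u ^+ k == 1)%g]| * n)%N.
Proof.
rewrite -big_mkcondr sum_nat_cond_const; congr (_ * _)%N.
by apply: eq_card => u; rewrite !inE val_unit_expr_eq1.
Qed.

Hypothesis nonunitD : local_ring R.
Hypotheses (unit2 : (2%:R : R) \is a GRing.unit) (unit3 : (3%:R : R) \is a GRing.unit).

Local Notation nonunits := [set x : R | x \isn't a GRing.unit].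
Local Notation Fix u := ('Fix_(nonsingular_curves | scale_action)[u])%g.

Definition cusp : {set R * R} := [set c | c.1 ^+ 3 - c.2 ^+ 2 \isn't a GRing.unit].

(* For t a unit, (s, r) = (t^2 + x, t s) satisfies s^3 - r^2 = x s^2. *)
Definition cusp_lift (c : R * R) : R * R :=
  let: (t, x) := c in
  if t \is a GRing.unit then (t ^+ 2 + x, t * (t ^+ 2 + x)) else (t, x).

Lemma cusp_lift_unit t x : x \isn't a GRing.unit ->
  ((cusp_lift (t, x)).1 \is a GRing.unit) = (t \is a GRing.unit).
Proof.
move=> nx; rewrite /cusp_lift; case: ifP => //= ut.
by rewrite unitrD_nonunit // unitrX_pos.
Qed.

Lemma cusp_lift_inj : {in setX setT nonunits &, injective cusp_lift}.
Proof.
move=> [t x] [t' x'] /setXP[_ nx] /setXP[_ nx'] eq_lift.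
rewrite !inE in nx nx'.
have := cusp_lift_unit t nx; rewrite eq_lift cusp_lift_unit // => ut_eq.
move: eq_lift; rewrite /cusp_lift ut_eq.
case ut: (t \is a GRing.unit) => //; case=> eq_s eq_r.
have us : t ^+ 2 + x \is a GRing.unit by rewrite unitrD_nonunit // unitrX_pos.
have et : t = t' by apply: (mulIr us); rewrite eq_r eq_s.
by move: eq_s; rewrite et => /addrI ->.
Qed.

Lemma cusp_lift_image : cusp_lift @: setX setT nonunits = cusp.
Proof.
apply/setP => c; apply/imsetP/idP.
  case=> [[t x]] /setXP[_]; rewrite inE => nx ->.
  rewrite inE /cusp_lift /=; case: ifP => ut /=.
    have -> : (t ^+ 2 + x) ^+ 3 - (t * (t ^+ 2 + x)) ^+ 2 = x * (t ^+ 2 + x) ^+ 2.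
      by ring.
    exact: nonunitMr.
  by rewrite nonunitD ?unitrN ?unitrX_pos ?ut.
case: c => s r; rewrite inE /= => ncusp.
case us: (s \is a GRing.unit); last first.
  exists (s, r) => //=; last by rewrite /cusp_lift us.
  rewrite !inE /= -(unitrX_pos r (isT : (0 < 2)%N)) -[r ^+ 2](subKr (s ^+ 3)).
  by rewrite nonunitD ?unitrN ?unitrX_pos ?us.
pose t := r / s; pose x := s - t ^+ 2.
have er : r = t * s by rewrite /t mulrVK.
have nx : x \isn't a GRing.unit.
  have cusp_eq : s ^+ 3 - r ^+ 2 = x * s ^+ 2 by rewrite er /x; ring.
  by move: ncusp; rewrite cusp_eq unitrM unitrX_pos // us andbT.
have ut : t \is a GRing.unit.
  rewrite -(unitrX_pos t (isT : (0 < 2)%N)) (_ : t ^+ 2 = s + - x).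
    by rewrite unitrD_nonunit ?unitrN.
  by rewrite /x; ring.
exists (t, x); first by rewrite !inE.
by rewrite /cusp_lift ut (_ : t ^+ 2 + x = s) -?er // /x; ring.
Qed.

Lemma card_cusp : #|cusp| = (#|R| * #|nonunits|)%N.
Proof. by rewrite -cusp_lift_image (card_in_imset cusp_lift_inj) cardsX cardsT. Qed.

Lemma cubic_disc_cusp (s r : R) :
  cubic_disc (- 3%:R * s, 2%:R * r) = 2%:R ^+ 2 * 3%:R ^+ 3 * (s ^+ 3 - r ^+ 2).
Proof. by rewrite /cubic_disc /=; ring. Qed.

Lemma card_nonsingular_curves : #|nonsingular_curves| = (#|R| * #|[set: {unit R}]|)%N.
Proof.
pose f (c : R * R) := (- 3%:R * c.1, 2%:R * c.2).
have f_inj : injective f.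
  have u3 : (- 3%:R : R) \is a GRing.unit by rewrite unitrN.
  by move=> [s r] [s' r'] [/(mulrI u3) -> /(mulrI unit2) ->].
rewrite -(card_preimset _ f_inj).
have -> : f @^-1: nonsingular_curves = ~: cusp.
  apply/setP => [[s r]]; rewrite !inE cubic_disc_cusp negbK.
  by rewrite !unitrM unit2 unit3.
rewrite cardsCs setCK card_prod card_cusp -mulnBr card_unitsE [in RHS]cardsCs.
congr (_ * (_ - _))%N; by apply: eq_card => x; rewrite !inE.
Qed.

Lemma nonsingular_unit_coef c :
  c \in nonsingular_curves -> (c.1 \is a GRing.unit) || (c.2 \is a GRing.unit).
Proof.
apply: contraLR; rewrite negb_or inE => /andP[na nb]; rewrite /cubic_disc unitrN.
by apply: nonunitD; rewrite unitrM unitrX_pos // ?(negbTE na) ?(negbTE nb) andbF.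
Qed.

Lemma nonsingular_j1728 a : ((a, 0) \in nonsingular_curves) = (a \is a GRing.unit).
Proof.
rewrite inE /cubic_disc /= expr0n mulr0 addr0 unitrN unitrM unitrX_pos //.
by rewrite [4%:R](_ : _ = 2%:R ^+ 2) ?unitrX // -natrX.
Qed.

Lemma nonsingular_j0 b : ((0, b) \in nonsingular_curves) = (b \is a GRing.unit).
Proof.
rewrite inE /cubic_disc /= expr0n mulr0 add0r unitrN unitrM unitrX_pos //.
by rewrite [27%:R](_ : _ = 3%:R ^+ 3) ?unitrX // -natrX.
Qed.

Lemma fix_scale_id u : val u ^+ 2 = 1 -> Fix u = nonsingular_curves.
Proof.
move=> u2; apply/setP => c; rewrite mem_fix_scale.
have [u4 u6] : val u ^+ 4 = 1 /\ val u ^+ 6 = 1.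
  by rewrite -[4%N]/(2 * 2)%N -[6%N]/(2 * 3)%N !exprM u2 !expr1n.
by rewrite u4 u6 !mul1r !eqxx !andbT.
Qed.

Lemma fix_scale_j1728 u : val u ^+ 4 = 1 -> val u ^+ 2 != 1 ->
  Fix u = [set c | (c.1 \is a GRing.unit) && (c.2 == 0)].
Proof.
move=> u4 u2.
have u6 : val u ^+ 6 = val u ^+ 2 by rewrite -[6%N]/(4 + 2)%N exprD u4 mul1r.
have u6B1 : val u ^+ 6 - 1 \is a GRing.unit.
  by rewrite u6 (unit_subr1_of_root1 _ (k := 2)) // -exprM.
apply/setP => -[a b]; rewrite mem_fix_scale [in RHS]inE /= u4 mul1r eqxx.
rewrite mulr_fixed_eq0 //.
by case: eqP => [->|_]; rewrite ?nonsingular_j1728 ?andbT ?andbF.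
Qed.

Lemma fix_scale_j0 u : val u ^+ 6 = 1 -> val u ^+ 2 != 1 ->
  Fix u = [set c | (c.1 == 0) && (c.2 \is a GRing.unit)].
Proof.
move=> u6 u2; have u4B1 : val u ^+ 4 - 1 \is a GRing.unit.
  apply: (unit_subr1_of_root1 _ (k := 3)) => //.
    by rewrite -exprM -[(4 * 3)%N]/(6 * 2)%N exprM u6 expr1n.
  apply: contra u2 => /eqP u4; apply/eqP.
  by rewrite -u6 -[6%N]/(4 + 2)%N exprD u4 mul1r.
apply/setP => -[a b]; rewrite mem_fix_scale [in RHS]inE /= u6 mul1r eqxx andbT.
by rewrite mulr_fixed_eq0 // andbC; case: eqP => [->|_]; rewrite ?nonsingular_j0.
Qed.

Lemma fix_scale_eq0 u : val u ^+ 4 != 1 -> val u ^+ 6 != 1 -> Fix u = set0.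
Proof.
move=> u4 u6; apply/setP => c; rewrite mem_fix_scale in_set0.
apply/and3P => -[/nonsingular_unit_coef/orP[ua|ub] fa fb].
  by move: u4; rewrite -(mulr_fixed_unit _ ua) fa.
by move: u6; rewrite -(mulr_fixed_unit _ ub) fb.
Qed.

Lemma card_j1728 :
  #|[set c : R * R | (c.1 \is a GRing.unit) && (c.2 == 0)]| = #|[set: {unit R}]|.
Proof.
rewrite card_unitsE -[RHS]muln1 -[X in (_ * X)%N](cards1 (0 : R)) -cardsX.
by apply: eq_card => -[a b]; rewrite !inE.
Qed.

Lemma card_j0 :
  #|[set c : R * R | (c.1 == 0) && (c.2 \is a GRing.unit)]| = #|[set: {unit R}]|.
Proof.
rewrite card_unitsE -[RHS]mul1n -[X in (X * _)%N](cards1 (0 : R)) -cardsX.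
by apply: eq_card => -[a b]; rewrite !inE.
Qed.

Lemma card_fix_scale u : #|Fix u| =
  if val u ^+ 2 == 1 then #|nonsingular_curves|
  else if (val u ^+ 4 == 1) || (val u ^+ 6 == 1) then #|[set: {unit R}]| else 0%N.
Proof.
case: ifP => [/eqP u2 | /negbT u2]; first by rewrite fix_scale_id.
have [/eqP u4 | u4] /= := boolP (val u ^+ 4 == 1).
  by rewrite fix_scale_j1728 ?card_j1728.
have [/eqP u6 | u6] := boolP (val u ^+ 6 == 1); first by rewrite fix_scale_j0 ?card_j0.
by rewrite fix_scale_eq0 ?cards0.
Qed.

Local Notation roots1 k := [set u : {unit R} | (u ^+ k == 1)%g].

Theorem card_orbits_nonsingular_curves :
  (#|orbit scale_action setT @: nonsingular_curves| + 2 * #|roots1 2|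
   = #|roots1 2| * #|R| + #|roots1 4| + #|roots1 6|)%N.
Proof.
set phi := #|[set: {unit R}]|.
have phi_gt0 : (0 < phi)%N by apply/card_gt0P; exists 1%g; rewrite inE.
have fix_count u : (#|Fix u| + (if val u ^+ 2 == 1%R then 2 * phi else 0)
   = (if val u ^+ 2 == 1%R then #|nonsingular_curves| else 0)
     + (if val u ^+ 4 == 1%R then phi else 0) + (if val u ^+ 6 == 1%R then phi else 0))%N.
  rewrite card_fix_scale -/phi; case: (boolP (val u ^+ 2 == 1)) => [/eqP u2 | u2].
    rewrite -[4%N]/(2 * 2)%N -[6%N]/(2 * 3)%N !exprM u2 !expr1n eqxx; lia.
  case: (boolP (val u ^+ 4 == 1)) => [/eqP u4 | _] /=; last by case: ifP; lia.
  have /negPf -> : val u ^+ 6 != 1 by rewrite -[6%N]/(4 + 2)%N exprD u4 mul1r.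
  lia.
apply/eqP; rewrite -(eqn_pmul2r phi_gt0); apply/eqP.
set g2 := #|roots1 2|; set g4 := #|roots1 4|; set g6 := #|roots1 6|.
have -> : ((g2 * #|R| + g4 + g6) * phi
           = g2 * (#|R| * phi) + g4 * phi + g6 * phi)%N by lia.
rewrite mulnDl -mulnA mulnCA -(Frobenius_Cauchy acts_nonsingular_curves).
rewrite -card_nonsingular_curves -!sum_if_expr_eq1 -!big_split.
by apply: eq_bigr => u _; exact: fix_count.
Qed.

End ReducedCurves.

Arguments nonsingular_curves {R}.
Arguments scale_action {R}.

Lemma curve_isoE n (c c' : 'Z_n * 'Z_n) :
  curve_iso c c' = (c' \in orbit scale_action setT c).
Proof.
apply/existsP/imsetP => [[u /and3P[uu /eqP e1 /eqP e2]] | [v _ ->]].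
  have uV : u^-1 \is a GRing.unit by rewrite unitrV.
  by exists (FinRing.Unit uV); rewrite ?inE //; case: c' e1 e2 => a b /= -> ->.
by exists (val v)^-1; rewrite unitrV (valP v) invrK /= !eqxx.
Qed.

Lemma C_R_orbits n : (2%:R : 'Z_n) \is a GRing.unit ->
  C_R n = #|orbit scale_action setT @: (nonsingular_curves : {set 'Z_n * 'Z_n})|.
Proof.
move=> unit2.
have nsE : nonsing_curves n = nonsingular_curves.
  apply/setP => c; rewrite !inE /nonsingular /disc /cubic_disc.
  by rewrite unitrM !unitrN [16%:R](_ : _ = 2%:R ^+ 4) ?unitrX // -natrX.
have classE : {in nonsingular_curves, (fun c : 'Z_n * 'Z_n =>
    [set c' in nonsingular_curves | curve_iso c c']) =1 orbit scale_action setT}.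
  move=> c c_ns; apply/setP => c'; rewrite inE curve_isoE andb_idl // => /imsetP[u _ ->].
  by rewrite (actsP (acts_nonsingular_curves _) u (in_setT u)).
by rewrite /C_R nsE (eq_in_imset classE).
Qed.

Section PrimePowerModulus.

Variables (p m : nat).
Hypotheses (p_pr : prime p) (m_gt0 : (0 < m)%N).

Local Notation R := 'Z_(p ^ m).

Lemma pexp_gt1 : (1 < p ^ m)%N.
Proof. by rewrite -(expn0 p) ltn_exp2l ?prime_gt1. Qed.

Lemma Zp_pexp_unit_natE k : ((k%:R : R) \is a GRing.unit) = coprime p k.
Proof. by rewrite unitZpE ?pexp_gt1 // coprime_pexpl. Qed.

Lemma Zp_pexp_local : local_ring R.
Proof.
move=> x y; rewrite -[x]natr_Zp -[y]natr_Zp -natrD !Zp_pexp_unit_natE.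
rewrite !prime_coprime // !negbK.
exact: dvdn_add.
Qed.

Lemma card_Zp_pexp : #|R| = (p ^ m)%N.
Proof. by rewrite card_ord Zp_cast ?pexp_gt1. Qed.

Lemma card_units_Zp_pexp : #|[set: {unit R}]| = (p.-1 * p ^ m.-1)%N.
Proof.
rewrite -[LHS]/#|units_Zp (p ^ m)| card_units_Zp ?expn_gt0 ?prime_gt0 //.
exact: totient_pfactor.
Qed.

(* U is the automorphism group of the cyclic group Z/p^m, cyclic for odd p. *)
Lemma cyclic_units_Zp_pexp : odd p -> cyclic [set: {unit R}].
Proof.
move=> p_odd; pose a : R := Zp1.
have oa : #[a]%g = (p ^ m)%N by rewrite order_Zp1 Zp_cast ?pexp_gt1.
have := Zp_unit_isog a; rewrite oa => /isog_cyclic ->.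
have pa : (p.-group <[a]>)%g by rewrite /pgroup -orderE oa pnatX pnat_id.
have nta : <[a]>%g != 1%g by rewrite -cardG_gt1 -orderE oa pexp_gt1.
have [? [_ [_ cycF _ _] Acase]] := cyclic_pgroup_Aut_structure pa (cycle_cyclic a) nta.
case: ifP Acase => [_ AF | _ [t [_ _ _]]]; first by rewrite /= AF.
by rewrite p_odd => -[[cycA _] _ _].
Qed.

Lemma card_units_Zp_pexp_expr_eq1 k : odd p -> coprime k p ->
  #|[set u : {unit R} | (u ^+ k == 1)%g]| = gcdn k p.-1.
Proof.
move=> p_odd kp; rewrite -(Gauss_gcdl _ (coprimeXr m.-1 kp)) -card_units_Zp_pexp.
rewrite -card_cyclic_expg_eq1 ?cyclic_units_Zp_pexp //.
by apply: eq_card => u; rewrite !inE.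
Qed.

End PrimePowerModulus.

Lemma class_count_mod12 p N C : coprime 12 p ->
  (C + 2 * gcdn 2 p.-1 = gcdn 2 p.-1 * N + gcdn 4 p.-1 + gcdn 6 p.-1)%N ->
  C = (if p %% 12 == 1 then 2 * N + 6
       else if p %% 12 == 5 then 2 * N + 2
       else if p %% 12 == 7 then 2 * N + 4
       else 2 * N)%N.
Proof.
move=> p12.
have p2 : (p %% 2 = 1)%N by rewrite modn2 -coprime2n (coprime_dvdl _ p12).
have p3 : (p %% 3 != 0)%N by rewrite -/(dvdn 3 p) -prime_coprime // (coprime_dvdl _ p12).
have -> : gcdn 2 p.-1 = 2%N by rewrite -gcdn_modr (_ : p.-1 %% 2 = 0)%N //; lia.
have -> : gcdn 4 p.-1 = (if p.-1 %% 4 == 0 then 4 else 2)%N.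
  by rewrite -gcdn_modr; have [->|->] : (p.-1 %% 4 = 0 \/ p.-1 %% 4 = 2)%N by lia.
have -> : gcdn 6 p.-1 = (if p.-1 %% 6 == 0 then 6 else 2)%N.
  by rewrite -gcdn_modr; have [->|->] : (p.-1 %% 6 = 0 \/ p.-1 %% 6 = 4)%N by lia.
by do !case: eqP => ?; lia.
Qed.

Theorem theorem9 (p m : nat) :
  prime p -> coprime p 6 -> (1 <= m)%N ->
  C_R (p ^ m) =
    (if p %% 12 == 1 then 2 * p ^ m + 6
     else if p %% 12 == 5 then 2 * p ^ m + 2
     else if p %% 12 == 7 then 2 * p ^ m + 4
     else 2 * p ^ m)%N.
Proof.
move=> p_pr p6 m_gt0.
have p12 : coprime 12 p.
  by rewrite coprime_sym -[12%N]/(2 * 6)%N coprimeMr p6 (coprime_dvdr _ p6).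
have coprime_p k : (k %| 12)%N -> coprime k p by move/coprime_dvdl; apply.
have p_odd : odd p by rewrite -coprime2n coprime_p.
have unit_k k : (k %| 12)%N -> (k%:R : 'Z_(p ^ m)) \is a GRing.unit.
  by move=> k12; rewrite Zp_pexp_unit_natE // coprime_sym coprime_p.
have := card_orbits_nonsingular_curves (Zp_pexp_local p_pr m_gt0)
  (unit_k 2 isT) (unit_k 3 isT).
rewrite -C_R_orbits ?unit_k // card_Zp_pexp //.
rewrite !card_units_Zp_pexp_expr_eq1 ?coprime_p //.
exact: class_count_mod12.
Qed.
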